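(* Setting. Fix an integer $v\ge1$ and numbers $\mathbf p_{kj}\in(0,1)$, $k\in\{0,1,2,\dots\}$, $1\le j\le 2^{v-1}$, where $j$ numbers the binary words of length $v$ ending in $1$. Assume there are constants $1>\delta_1>\delta_2>0$ with $\delta_2\le\mathbf p_{kj}\le\delta_1$ for all $k,j$. Let the initial configuration $r(0)$ contain at least one $1$. Let $\tau_k$, $k\ge1$, be the regeneration times described in the context. Conclusion. For all $k,n\in\mathbb N$, $$\mathbf P(\tau_k\ge n)\le Ce^{-\rho n},\qquad C:=\frac{1}{1-(1-\delta_1)^{v-1}\delta_2},\quad \rho:=\frac1v\ln C.$$
   Context: Chain. The chain $r(n)=(r_i(n))_{i\le n}$ starts from the configuration $r(0)=(r_i(0))_{i\le0}\in\{0,1\}^{\{\dots,-1,0\}}$. Given $r(n)$, let $m_n:=\sup\{i\le n:r_i(n)=1\}$. Then $r(n+1)$ extends $r(n)$ by one symbol, which is $1$ with probability $\mathbf p_{k_nj_n}$ and $0$ otherwise. Here $k_n=n-m_n$ and $j_n$ is the number of the word $(r_{m_n-v+1}(n),\dots,r_{m_n}(n))$. Auxiliary Markov chain. $Y(n):=(n-m_n,(r_{m_n-v+1}(n),\dots,r_{m_n}(n)))$, and $y_0:=(0,(0,\dots,0,1))$. Regeneration times. $\tau_1:=\min\{n>0:Y(n)=y_0\}$ and $\tau_k:=\min\{n>\tau_1+\dots+\tau_{k-1}:Y(n)=y_0\}-(\tau_1+\dots+\tau_{k-1})$ for $k\ge2$. *)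

From HB Require Import structures.
From mathcomp Require Import all_boot all_order all_algebra.
From mathcomp Require Import all_classical all_reals.
From mathcomp Require Import ereal measure probability.
From mathcomp Require Import sequences.
From mathcomp.analysis Require Import exp.
Set Implicit Arguments. Unset Strict Implicit. Unset Printing Implicit Defensive.
Import Order.TTheory GRing.Theory Num.Theory.

(* Configuration r(n) = (r_i(n))_{i <= n}, encoded by
   - r0 : nat -> bool,  r0 i = r_{-i}(0)   (the initial configuration),
   - x  : nat -> bool,  x t = the symbol appended at time t (t >= 1).
   Since r(n+1) extends r(n), r_i(n) = sym r0 x i for all i <= n. *)
Definition sym (r0 x : nat -> bool) (i : int) : bool :=
  match i with
  | Posz 0 => r0 0%N
  | Posz (S k) => x k.+1
  | Negz k => r0 k.+1
  end.

(* k_n = n - m_n, where m_n = sup{i <= n : r_i(n) = 1}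
   (0 if there is no 1, which cannot happen when r0 contains a 1). *)
Definition gap (r0 x : nat -> bool) (n : nat) : nat :=
  match boolp.pselect (exists d : nat, sym r0 x (n%:Z - d%:Z)%R) with
  | left h => ex_minn h
  | right _ => 0%N
  end.

Definition lastone (r0 x : nat -> bool) (n : nat) : int :=
  (n%:Z - (gap r0 x n)%:Z)%R.

Definition lastword (v : nat) (r0 x : nat -> bool) (n : nat) : seq bool :=
  [seq sym r0 x (lastone r0 x n - (v%:Z - 1) + i%:Z)%R | i <- iota 0 v].

Definition Y (v : nat) (r0 x : nat -> bool) (n : nat) : nat * seq bool :=
  (gap r0 x n, lastword v r0 x n).

Definition y0 (v : nat) : nat * seq bool := (0%N, rcons (nseq v.-1 false) true).

Definition visit (v : nat) (r0 x : nat -> bool) (n : nat) : Prop :=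
  (0 < n)%N /\ Y v r0 x n = y0 v.

(* Tsum k = tau_1 + ... + tau_k (the k-th visit time to y_0 after time 0);
   None means +infinity (min of the empty set). Tsum 0 = 0. *)
Fixpoint Tsum (v : nat) (r0 x : nat -> bool) (k : nat) : option nat :=
  match k with
  | 0 => Some 0%N
  | S k' =>
    match Tsum v r0 x k' with
    | None => None
    | Some t =>
      match boolp.pselect (exists s : nat, (t < s)%N /\ visit v r0 x s) with
      | left h =>
          let P := fun s : nat => `[< (t < s)%N /\ visit v r0 x s >] in
          Some (@ex_minn P (let: ex_intro s hs := h in
                             ex_intro _ s (introT (asboolP _) hs)))
      | right _ => None
      end
    end
  end.

Definition tau (v : nat) (r0 x : nat -> bool) (k : nat) : option nat :=
  match Tsum v r0 x k.-1, Tsum v r0 x k with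
  | Some a, Some b => Some (b - a)%N
  | _, _ => None
  end.

Definition opt_ge (t : option nat) (n : nat) : Prop :=
  match t with None => True | Some s => (n <= s)%N end.

Definition cyl (T : Type) (X : nat -> T -> bool) (b : nat -> bool) (n : nat) : set T :=
  [set w | forall t, (0 < t <= n)%N -> X t w = b t].

Definition tau_ge_event (T : Type) (v : nat) (r0 : nat -> bool)
  (X : nat -> T -> bool) (k n : nat) : set T :=
  [set w | opt_ge (tau v r0 (fun t => X t w) k) n].

Definition step_prob (R : ringType) (v : nat) (p : nat -> seq bool -> R)
  (r0 b : nat -> bool) (n : nat) : R :=
  if b n.+1 then p (gap r0 b n) (lastword v r0 b n)
  else (1 - p (gap r0 b n) (lastword v r0 b n))%R.

(* Whatever the symbols up to a time a, the next v symbols are 0, ..., 0, 1 with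
   conditional probability at least q = (1 - delta1)^(v-1) delta2 (by the bounds on p), and
   then Y visits y0 at time a + v. Hence, conditionally on any event determined by the first
   a symbols, Y avoids y0 during m consecutive blocks of length v with probability at most
   (1 - q)^m. Conditioning on the time a of the (k-1)-th visit gives
   P(tau_k >= n) <= (1 - q)^((n-1) div v) <= C exp(-rho n), C = 1/(1 - q). The event
   tau_k = +oo also counts in {tau_k >= n}; letting n -> oo in the same bound shows that it
   is negligible, so the visit times are almost surely finite. *)

From HB Require Import structures.
From mathcomp Require Import all_boot all_order all_algebra.
From mathcomp Require Import all_classical all_reals.
From mathcomp Require Import ereal measure probability.
From mathcomp Require Import sequences normedtype.
From mathcomp.analysis Require Import exp.
From mathcomp Require Import zify lra.
Import Order.TTheory GRing.Theory Num.Theory.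
Import numFieldNormedType.Exports.
Set Implicit Arguments. Unset Strict Implicit. Unset Printing Implicit Defensive.
Local Open Scope classical_set_scope.
Local Open Scope ring_scope.

(** * Visits to y0 along a path *)

Lemma sym_neg (r0 x : nat -> bool) (i : nat) : sym r0 x (- i%:Z) = r0 i.
Proof. by case: i => [|i] //; rewrite -NegzE. Qed.

Definition first_true (f : nat -> bool) : nat :=
  if boolp.pselect (exists d, f d) is left h then ex_minn h else 0%N.

Lemma first_trueP (f : nat -> bool) : (exists d, f d) ->
  f (first_true f) /\ forall d, f d -> (first_true f <= d)%N.
Proof. by move=> ex; rewrite /first_true; case: boolp.pselect => // h; case: ex_minnP. Qed.

Lemma gapE (r0 x : nat -> bool) n :
  gap r0 x n = first_true (fun d : nat => sym r0 x (n%:Z - d%:Z)).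
Proof. by []. Qed.

Lemma sym_lastone (r0 x : nat -> bool) n : (exists i, r0 i) -> sym r0 x (lastone r0 x n).
Proof.
move=> [i ri]; rewrite /lastone gapE.
suff ex : exists d : nat, sym r0 x (n%:Z - d%:Z) by case: (first_trueP ex).
by exists (n + i)%N; rewrite (_ : _ - _ = - i%:Z) ?sym_neg //; lia.
Qed.

Lemma gap0 (r0 x : nat -> bool) n : sym r0 x n%:Z -> gap r0 x n = 0%N.
Proof.
move=> h; rewrite gapE.
have ex : exists d : nat, sym r0 x (n%:Z - d%:Z) by exists 0%N; rewrite subr0.
by apply/eqP; rewrite -leqn0; apply: (proj2 (first_trueP ex)); rewrite subr0.
Qed.

Lemma size_lastword v (r0 x : nat -> bool) n : size (lastword v r0 x n) = v.
Proof. by rewrite size_map size_iota. Qed.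

Lemma iota0S m : iota 0 m.+1 = rcons (iota 0 m) m.
Proof. by rewrite -cats1 -addn1 iotaD. Qed.

Lemma last_lastword v (r0 x : nat -> bool) n : (0 < v)%N -> (exists i, r0 i) ->
  last false (lastword v r0 x n) = true.
Proof.
case: v => [//|v] _ h; rewrite /lastword iota0S map_rcons last_rcons.
by rewrite (_ : _ + _ = lastone r0 x n) ?sym_lastone //; lia.
Qed.

Definition agree (x y : nat -> bool) (n : nat) := forall t, (0 < t <= n)%N -> x t = y t.

Definition determined (n : nat) (Q : (nat -> bool) -> Prop) :=
  forall x y, agree x y n -> Q x -> Q y.

Lemma agree_sym x y n : agree x y n -> agree y x n.
Proof. by move=> h t /h ->. Qed.

Lemma agree_le x y m n : (m <= n)%N -> agree x y n -> agree x y m.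
Proof. by move=> le h t /andP[t0 tm]; apply: h; lia. Qed.

Lemma sym_agree (r0 x y : nat -> bool) n (i : int) : agree x y n -> i <= n%:Z ->
  sym r0 x i = sym r0 y i.
Proof. by move=> h; case: i => [[|k]|k] //= hk; apply: h; lia. Qed.

Lemma gap_agree (r0 x y : nat -> bool) n : agree x y n -> gap r0 x n = gap r0 y n.
Proof.
move=> h; rewrite !gapE; congr first_true; apply: boolp.funext => d.
by apply: sym_agree h _; lia.
Qed.

Lemma lastword_agree v (r0 x y : nat -> bool) n : agree x y n ->
  lastword v r0 x n = lastword v r0 y n.
Proof.
move=> h; rewrite /lastword /lastone (gap_agree r0 h).
by apply/eq_in_map => i; rewrite mem_iota => /andP[_ hi]; apply: sym_agree h _; lia.
Qed.

Lemma visit_determined v r0 n : determined n (fun x => visit v r0 x n).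
Proof.
move=> x y h [n0 hY]; split => //.
by rewrite /Y -(gap_agree r0 h) -(lastword_agree v r0 h).
Qed.

Lemma visit_block v (r0 x : nat -> bool) a : (0 < v)%N ->
  x (a + v)%N -> (forall t, (a < t < a + v)%N -> x t = false) -> visit v r0 x (a + v).
Proof.
case: v => [//|v] _ hv hf; split; first by rewrite addnS.
have g0 : gap r0 x (a + v.+1) = 0%N by apply: gap0; rewrite addnS /= -addnS.
rewrite /Y /y0 g0; congr pair; rewrite /lastword /lastone g0 iota0S map_rcons /=.
have -> : (a + v.+1)%N%:Z - 0%N%:Z - (v.+1%:Z - 1) + v%:Z = Posz (a + v).+1 by lia.
rewrite /= -addnS hv; congr rcons.
apply: (@eq_from_nth _ false); first by rewrite size_map size_iota size_nseq.
move=> i; rewrite size_map size_iota => hi.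
rewrite (nth_map 0%N) ?size_iota // nth_iota // nth_nseq hi add0n.
have -> : (a + v.+1)%N%:Z - 0%N%:Z - (v.+1%:Z - 1) + i%:Z = Posz (a + i).+1 by lia.
by apply: hf; lia.
Qed.

Definition next_visit v (r0 x : nat -> bool) (t : nat) : option nat :=
  match boolp.pselect (exists s : nat, (t < s)%N /\ visit v r0 x s) with
  | left h =>
      let P := fun s : nat => `[< (t < s)%N /\ visit v r0 x s >] in
      Some (@ex_minn P (let: ex_intro s hs := h in
                         ex_intro _ s (introT (asboolP _) hs)))
  | right _ => None
  end.

Lemma TsumS v (r0 x : nat -> bool) k :
  Tsum v r0 x k.+1 = obind (next_visit v r0 x) (Tsum v r0 x k).
Proof. by []. Qed.

Lemma next_visit_Some v (r0 x : nat -> bool) t s : next_visit v r0 x t = Some s ->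
  [/\ (t < s)%N, visit v r0 x s & forall s', (t < s')%N -> visit v r0 x s' -> (s <= s')%N].
Proof.
rewrite /next_visit; case: boolp.pselect => [h|//].
case: ex_minnP => m /asboolP [h1 h2] hmin [<-]; split => // s' h1' h2'.
by apply: hmin; apply/asboolP.
Qed.

Lemma next_visit_None v (r0 x : nat -> bool) t s :
  next_visit v r0 x t = None -> (t < s)%N -> ~ visit v r0 x s.
Proof. by rewrite /next_visit; case: boolp.pselect => [//|h] _ ts vs; apply: h; exists s. Qed.

Lemma next_visit_eq v (r0 x : nat -> bool) t s : (t < s)%N -> visit v r0 x s ->
  (forall s', (t < s')%N -> visit v r0 x s' -> (s <= s')%N) ->
  next_visit v r0 x t = Some s.
Proof.
move=> ts vs hmin; case E: next_visit => [s'|]; last by have := next_visit_None E ts.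
have [ts' vs' hmin'] := next_visit_Some E.
by congr Some; apply/eqP; rewrite eqn_leq hmin' // hmin.
Qed.

Lemma Tsum_determined v r0 k a : determined a (fun x => Tsum v r0 x k = Some a).
Proof.
elim: k a => [|k IH] a x y h; first by [].
rewrite !TsumS.
case E: (Tsum v r0 x k) => [a'|] //= hn; have [a'a vxa hmin] := next_visit_Some hn.
rewrite (IH a' x y (agree_le (ltnW a'a) h) E) /=.
apply: next_visit_eq => //; first exact: visit_determined h vxa.
move=> s' a's' vys'; case: (leqP s' a) => [s'a|]; last exact: ltnW.
exact/hmin/(visit_determined (agree_sym (agree_le s'a h))).
Qed.

Definition no_visit v (r0 x : nat -> bool) (a c : nat) : Prop :=
  forall s, (a < s <= c)%N -> ~ visit v r0 x s.

Lemma no_visit_determined v r0 a c : determined c (fun x => no_visit v r0 x a c).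
Proof.
move=> x y h hx s /[dup] /andP[_ sc] hs /(visit_determined (agree_sym (agree_le sc h))).
exact: hx.
Qed.

Lemma no_visit_le v r0 x a c c' : (c' <= c)%N -> no_visit v r0 x a c -> no_visit v r0 x a c'.
Proof. by move=> c'c h s hs; apply: h; lia. Qed.

Lemma no_visit_cat v r0 x a c e : (a <= c <= e)%N ->
  no_visit v r0 x a e <-> no_visit v r0 x a c /\ no_visit v r0 x c e.
Proof.
move=> ace; split => [h|[h1 h2] s hs]; first by split => s hs; apply: h; lia.
by case: (leqP s c) => sc; [apply: h1 | apply: h2]; lia.
Qed.

Lemma tau_ge_iff v (r0 x : nat -> bool) j n :
  opt_ge (tau v r0 x j.+1) n <->
  Tsum v r0 x j = None \/ exists a, Tsum v r0 x j = Some a /\ no_visit v r0 x a (a + n.-1).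
Proof.
rewrite /tau TsumS /=; case: (Tsum v r0 x j) => [a|] /=; last by split => // _; left.
split => [h|[//|[a' [[<-] hnv]]]].
  right; exists a; split => // s /andP[a_s sc].
  case hn: (next_visit v r0 x a) h => [b|] /= h; last exact: next_visit_None hn a_s.
  by have [_ _ hmin] := next_visit_Some hn; move/(hmin s a_s); lia.
case hn: (next_visit v r0 x a) => [b|] //=; have [ab vb _] := next_visit_Some hn.
by case: (leqP n (b - a)) => // hlt; exfalso; apply: (hnv b) => //; lia.
Qed.

(** * Events determined by finitely many symbols *)

Definition traj T (X : nat -> T -> bool) (w : T) : nat -> bool := fun t => X t w.

Definition path_event T (X : nat -> T -> bool) (Q : (nat -> bool) -> Prop) : set T :=
  [set w | Q (traj X w)].

Lemma cyl_path_event T (X : nat -> T -> bool) b n :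
  cyl X b n = path_event X (fun x => agree x b n).
Proof. by []. Qed.

Definition upd (x : nat -> bool) (m : nat) (b : bool) : nat -> bool :=
  fun t => if t == m then b else x t.

Lemma upd_id (x : nat -> bool) m : upd x m (x m) = x.
Proof. by apply: boolp.funext => t; rewrite /upd; case: eqP => // ->. Qed.

Lemma determined_upd n Q b : determined n.+1 Q -> determined n (fun x => Q (upd x n.+1 b)).
Proof.
move=> hQ x y h; apply: hQ => t /andP[t0 tn]; rewrite /upd; case: eqP => // /eqP tne.
by apply: h; lia.
Qed.

Lemma cyl_ext T (X : nat -> T -> bool) b b' n : agree b b' n -> cyl X b n = cyl X b' n.
Proof. by move=> h; apply/seteqP; split => w /= hw t ht; rewrite hw // h. Qed.

Lemma cyl0 T (X : nat -> T -> bool) b : cyl X b 0 = setT.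
Proof. by apply/seteqP; split => w //= _ t; lia. Qed.

Lemma cyl_split T (X : nat -> T -> bool) b n :
  cyl X b n = cyl X (upd b n.+1 true) n.+1 `|` cyl X (upd b n.+1 false) n.+1.
Proof.
apply/seteqP; split => w /=.
  move=> hw; case Xw: (X n.+1 w); [left | right] => t /andP[t0 tn];
    by rewrite /upd; case: eqP => [->//|tne]; apply: hw; lia.
by case=> hw t /andP[t0 tn]; rewrite hw /upd ?ltn_eqF //; lia.
Qed.

Lemma cyl_split_disjoint T (X : nat -> T -> bool) b n :
  cyl X (upd b n.+1 true) n.+1 `&` cyl X (upd b n.+1 false) n.+1 = set0.
Proof.
apply/seteqP; split => w //= [h1 h2].
have last_t : (0 < n.+1 <= n.+1)%N by rewrite leqnn.
by move: (h1 _ last_t) (h2 _ last_t); rewrite /upd eqxx => ->.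
Qed.

Section DeterminedEvents.
Context d (T : measurableType d) (X : nat -> T -> bool).
Hypothesis mX : forall t, (0 < t)%N -> measurable [set w | X t w].

Lemma measurable_path_event n Q : determined n Q -> measurable (path_event X Q).
Proof.
elim: n Q => [|n IH] Q hQ.
  have [[x0 Qx0]|nQ] := boolp.pselect (exists x, Q x).
    rewrite (_ : path_event X Q = setT) //; apply/seteqP; split => w //= _.
    by apply: hQ Qx0 => t; lia.
  rewrite (_ : path_event X Q = set0) //; apply/seteqP; split => w //= Qw.
  by apply: nQ; exists (traj X w).
have -> : path_event X Q =
    ([set w | X n.+1 w] `&` path_event X (fun x => Q (upd x n.+1 true))) `|`
    (~` [set w | X n.+1 w] `&` path_event X (fun x => Q (upd x n.+1 false))).
  apply/seteqP; split => w; rewrite /path_event /=.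
    by move=> Qw; case Xw: (X n.+1 w); [left | right]; split => //; rewrite -Xw upd_id.
  by case=> -[Xw]; [rewrite -Xw | move/negP/negbTE: Xw => <-]; rewrite upd_id.
apply: measurableU; apply: measurableI.
- exact: mX.
- exact: IH _ (@determined_upd _ _ true hQ).
- by apply: measurableC; exact: mX.
- exact: IH _ (@determined_upd _ _ false hQ).
Qed.

Lemma measurable_cyl b n : measurable (cyl X b n).
Proof.
rewrite cyl_path_event; apply: (measurable_path_event (n := n)) => x y h hx t ht.
by rewrite -(h t ht) hx.
Qed.

Lemma cylI_determined n Q b : determined n Q -> Q b ->
  cyl X b n `&` path_event X Q = cyl X b n.
Proof.
move=> hQ Qb; apply/seteqP; split => [w []//|w hw]; split => //.
by apply: (hQ b _ _ Qb) => t ht; rewrite /traj hw.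
Qed.

Lemma cylI_determined0 n Q b : determined n Q -> ~ Q b ->
  cyl X b n `&` path_event X Q = set0.
Proof.
move=> hQ nQb; apply/seteqP; split => w //= [hw Qw]; apply: nQb.
by apply: (hQ _ b _ Qw) => t ht; rewrite /traj hw.
Qed.

End DeterminedEvents.

Section RealProbability.
Context d (T : measurableType d) (R : realType) (P : probability T R).

Definition pr (A : set T) : R := fine (P A).

Lemma prE A : measurable A -> P A = (pr A)%:E.
Proof. by move=> mA; rewrite /pr fineK // fin_num_measure. Qed.

Lemma pr_ge0 A : 0 <= pr A.
Proof. exact: fine_ge0. Qed.

Lemma pr0 : pr set0 = 0.
Proof. by rewrite /pr measure0. Qed.

Lemma le_pr A B : measurable A -> measurable B -> A `<=` B -> pr A <= pr B.
Proof. by move=> mA mB AB; rewrite -lee_fin -!prE //; apply: le_measure; rewrite ?inE. Qed.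

Lemma prU A B : measurable A -> measurable B -> A `&` B = set0 ->
  pr (A `|` B) = pr A + pr B.
Proof.
move=> mA mB AB; have mAB : measurable (A `|` B) by exact: measurableU.
by apply: EFin_inj; rewrite EFinD -!prE //; apply: measureU.
Qed.

Lemma le_prU A B : measurable A -> measurable B -> pr (A `|` B) <= pr A + pr B.
Proof.
move=> mA mB; have mAB : measurable (A `|` B) by exact: measurableU.
by rewrite -lee_fin EFinD -!prE //; apply: measureU2.
Qed.

Lemma prD A B : measurable A -> measurable B -> B `<=` A -> pr (A `\` B) = pr A - pr B.
Proof.
move=> mA mB BA; have mAB : measurable (A `\` B) by exact: measurableD.
by rewrite -{2}(setDKU BA) prU ?addrK ?setDKI.
Qed.

Lemma pr_bigcup_le (S E : nat -> set T) (K : R) : 0 <= K ->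
  (forall a, measurable (S a)) -> (forall a, measurable (E a)) ->
  trivIset setT S -> (forall a, E a `<=` S a) ->
  (forall a, pr (E a) <= K * pr (S a)) -> pr (\bigcup_a E a) <= K.
Proof.
move=> K0 mS mE tS ES hE.
have tE : trivIset setT E.
  by move=> i j _ _ [w [/ES Si /ES Sj]]; apply: tS => //; exists w.
have mEU : measurable (\bigcup_a E a) by exact: bigcupT_measurable.
have mSU : measurable (\bigcup_a S a) by exact: bigcupT_measurable.
rewrite -lee_fin -prE // (measure_bigcup P _ (fun a => E a) (fun a _ => mE a) tE).
have hES a : (P (E a) <= K%:E * P (S a))%E.
  by rewrite (prE (mE a)) (prE (mS a)) -EFinM lee_fin.
apply: (le_trans (lee_nneseries _ (fun a _ => hES a))) => [a _ _|].
  exact: measure_ge0.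
rewrite nneseriesZl -?(measure_bigcup P _ (fun a => S a) (fun a _ => mS a) tS) //.
by rewrite -[leRHS]mule1 lee_wpmul2l ?lee_fin // probability_le1.
Qed.

End RealProbability.

(** * Geometric decay of the regeneration times *)

Lemma le0_of_le_expr (R : realType) (r x : R) : 0 <= r < 1 ->
  (forall m, x <= r ^+ m) -> x <= 0.
Proof.
move=> /andP[r0 r1] h.
have r_cvg : (GRing.exp r : R ^nat) @ \oo --> 0 by apply: cvg_expr; rewrite ger0_norm.
have : x <= limn (GRing.exp r : R ^nat).
  by apply: limr_ge; [exact: cvgP r_cvg | near=> m; apply: h].
by rewrite (cvg_lim _ r_cvg).
Unshelve. all: by end_near.
Qed.

(* lower bound for the conditional probability that the next v symbols are 0^(v-1) 1 *)
Definition block_prob (R : pzRingType) (v : nat) (delta1 delta2 : R) : R :=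
  (1 - delta1) ^+ v.-1 * delta2.

Lemma block_prob_gt0 (R : realFieldType) v (delta1 delta2 : R) :
  0 < delta2 -> delta1 < 1 -> 0 < block_prob v delta1 delta2.
Proof. by move=> d2 d1; rewrite mulr_gt0 // exprn_gt0 // subr_gt0. Qed.

Lemma block_prob_lt1 (R : realFieldType) v (delta1 delta2 : R) :
  0 < delta2 -> delta2 < delta1 -> delta1 < 1 -> block_prob v delta1 delta2 < 1.
Proof.
move=> d2 d21 d1; have : (1 - delta1) ^+ v.-1 <= 1 by apply: exprn_ile1; lra.
by move/(ler_piMl (ltW d2)); rewrite -/(block_prob v delta1 delta2); lra.
Qed.

Section RegenerationTail.
Variables (R : realType) (d : measure_display) (T : measurableType d).
Variables (P : probability T R) (v : nat) (p : nat -> seq bool -> R).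
Variables (delta1 delta2 : R) (r0 : nat -> bool) (X : nat -> T -> bool).
Hypothesis v_gt0 : (0 < v)%N.
Hypothesis delta2_gt0 : 0 < delta2.
Hypothesis delta21 : delta2 < delta1.
Hypothesis delta1_lt1 : delta1 < 1.
Hypothesis p_bounds : forall k w, size w = v -> last false w = true ->
  delta2 <= p k w /\ p k w <= delta1.
Hypothesis r0_has1 : exists i, r0 i.
Hypothesis X_measurable : forall t, (0 < t)%N -> measurable [set w | X t w].
Hypothesis P_cylS : forall b n,
  (P (cyl X b n.+1) = P (cyl X b n) * (step_prob v p r0 b n)%:E)%E.

Let q : R := block_prob v delta1 delta2.

Let decay_ge0 : 0 <= 1 - q.
Proof. by rewrite subr_ge0 ltW // block_prob_lt1. Qed.

Let decay_lt1 : 1 - q < 1.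
Proof. by rewrite ltrBlDl ltrDr block_prob_gt0. Qed.

Let no_visit_event a c := path_event X (fun x => no_visit v r0 x a c).

Lemma measurable_no_visit a c : measurable (no_visit_event a c).
Proof. exact: (measurable_path_event X_measurable (@no_visit_determined v r0 a c)). Qed.

Lemma pr_cylS b n : pr P (cyl X b n.+1) = pr P (cyl X b n) * step_prob v p r0 b n.
Proof.
have mc := measurable_cyl X_measurable b.
by apply: EFin_inj; rewrite EFinM -!prE ?mc.
Qed.

Lemma pr_cylS_ge b n :
  (if b n.+1 then delta2 else 1 - delta1) * pr P (cyl X b n) <= pr P (cyl X b n.+1).
Proof.
have [lo hi] := p_bounds (gap r0 b n) (size_lastword v r0 b n)
  (last_lastword b n v_gt0 r0_has1).
rewrite pr_cylS mulrC; apply: ler_wpM2l; first exact: pr_ge0.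
by rewrite /step_prob; case: (b n.+1); rewrite // lerD2l lerN2.
Qed.

Lemma pr_cyl_block (b : nat -> bool) a :
  b (a + v)%N -> (forall t, (a < t < a + v)%N -> b t = false) ->
  q * pr P (cyl X b a) <= pr P (cyl X b (a + v)).
Proof.
move=> b_last b_zeros.
have zeros i : (i < v)%N -> (1 - delta1) ^+ i * pr P (cyl X b a) <= pr P (cyl X b (a + i)).
  elim: i => [|i IH] lt_iv; first by rewrite expr0 mul1r addn0.
  rewrite addnS; apply: le_trans (pr_cylS_ge _ _); rewrite b_zeros; last lia.
  by rewrite exprS -mulrA ler_wpM2l ?subr_ge0 ?(ltW delta1_lt1) ?IH //; lia.
have [v' ev] : exists v', v = v'.+1 by exists v.-1; rewrite prednK.
rewrite /q /block_prob mulrAC ev /= addnS; apply: le_trans (pr_cylS_ge _ _).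
rewrite -addnS -ev b_last [_ * delta2]mulrC ler_wpM2l ?(ltW delta2_gt0) // zeros //.
by rewrite ev.
Qed.

Lemma pr_cyl_no_visit_block b a :
  pr P (cyl X b a `&` no_visit_event a (a + v)) <= (1 - q) * pr P (cyl X b a).
Proof.
pose bs t := if (t <= a)%N then b t else t == a + v.
have bs_last : bs (a + v)%N by rewrite /bs eqxx; case: ifP => //; lia.
have bs_zeros t : (a < t < a + v)%N -> bs t = false.
  by move=> ht; rewrite /bs; case: ifP => [|_]; [lia | apply/eqP; lia].
have -> : cyl X b a = cyl X bs a by apply: cyl_ext => t /andP[_ ta]; rewrite /bs ta.
have no_block : cyl X bs a `&` no_visit_event a (a + v) `<=` cyl X bs a `\` cyl X bs (a + v).
  move=> w [hw hnv]; split => // hw'; apply: (hnv (a + v)%N); first lia.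
  apply: (visit_determined (x := bs)) => [t ht|]; first by rewrite /traj hw'.
  exact: visit_block.
have mbs := measurable_cyl X_measurable bs.
apply: le_trans (le_pr P _ _ no_block) _.
- by apply: measurableI; [exact: mbs | exact: measurable_no_visit].
- exact: measurableD.
have block_sub : cyl X bs (a + v) `<=` cyl X bs a.
  by move=> w hw t /andP[t0 ta]; apply: hw; rewrite t0 /=; lia.
rewrite prD // mulrBl mul1r lerD2l lerN2.
exact: pr_cyl_block.
Qed.

Lemma pr_cyl_split b n (E : set T) : measurable E ->
  pr P (cyl X b n `&` E) =
  pr P (cyl X (upd b n.+1 true) n.+1 `&` E) + pr P (cyl X (upd b n.+1 false) n.+1 `&` E).
Proof.
move=> mE; have mcE b' : measurable (cyl X b' n.+1 `&` E).
  by apply: measurableI; [exact: measurable_cyl X_measurable _ _ | exact: mE].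
rewrite {1}(cyl_split X b n) setIUl prU ?mcE //.
by rewrite setIACA cyl_split_disjoint set0I.
Qed.

Lemma pr_le_of_cyl n (E F : set T) (K : R) : measurable E -> measurable F ->
  (forall b, pr P (cyl X b n `&` E) <= K * pr P (cyl X b n `&` F)) ->
  pr P E <= K * pr P F.
Proof.
move=> mE mF; elim: n => [|n IH] hn; first by have := hn (fun=> false); rewrite cyl0 !setTI.
by apply: IH => b; rewrite (pr_cyl_split b n mE) (pr_cyl_split b n mF) mulrDr lerD.
Qed.

Lemma pr_no_visit_block a Q : determined a Q ->
  pr P (path_event X Q `&` no_visit_event a (a + v)) <= (1 - q) * pr P (path_event X Q).
Proof.
move=> hQ; have mQ := measurable_path_event X_measurable hQ.
have mN := measurable_no_visit a (a + v).
apply: (@pr_le_of_cyl a) => [||b]; [exact: measurableI | exact: mQ |].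
have [Qb|nQb] := boolp.pselect (Q b).
  by rewrite setIA !(cylI_determined X hQ Qb); apply: pr_cyl_no_visit_block.
by rewrite setIA !(cylI_determined0 X hQ nQb) set0I pr0 mulr0.
Qed.

Lemma pr_no_visit_geometric m a Q : determined a Q ->
  pr P (path_event X Q `&` no_visit_event a (a + m * v)) <=
  (1 - q) ^+ m * pr P (path_event X Q).
Proof.
elim: m a Q => [|m IH] a Q hQ.
  have mQ := measurable_path_event X_measurable hQ.
  rewrite mul0n addn0 expr0 mul1r; apply: le_pr => //.
  by apply: measurableI => //; exact: measurable_no_visit.
set Q' := fun x => Q x /\ no_visit v r0 x a (a + v).
have hQ' : determined (a + v) Q'.
  move=> x y h [Qx nvx]; split; last exact: no_visit_determined h nvx.
  by apply: hQ Qx; apply: agree_le h; rewrite leq_addr.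
have -> : path_event X Q `&` no_visit_event a (a + m.+1 * v) =
    path_event X Q' `&` no_visit_event (a + v) (a + v + m * v).
  have cat x : no_visit v r0 x a (a + m.+1 * v) <->
      no_visit v r0 x a (a + v) /\ no_visit v r0 x (a + v) (a + v + m * v).
    by rewrite mulSn addnA; apply: no_visit_cat; rewrite leq_addr leq_addr.
  apply/seteqP; split => w /= [Qw nvw]; first by case/cat: nvw.
  by case: Qw => Qw nvw'; split => //; apply/cat.
apply: le_trans (IH _ _ hQ') _.
by rewrite exprSr -mulrA ler_wpM2l ?exprn_ge0 ?pr_no_visit_block ?decay_ge0.
Qed.

Let visit_time_event j a := path_event X (fun x => Tsum v r0 x j = Some a).

Let visit_time_inf_event j := path_event X (fun x => Tsum v r0 x j = None).

Lemma measurable_visit_time j a : measurable (visit_time_event j a).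
Proof. exact: (measurable_path_event X_measurable (@Tsum_determined v r0 j a)). Qed.

Lemma measurable_visit_time_inf j : measurable (visit_time_inf_event j).
Proof.
rewrite (_ : visit_time_inf_event j = ~` \bigcup_a visit_time_event j a).
  by apply/measurableC/bigcupT_measurable => a; exact: measurable_visit_time.
apply/seteqP; split => w; rewrite /visit_time_inf_event /visit_time_event /path_event /=.
  by move=> hN [a _]; rewrite /= hN.
move=> nS; case E: (Tsum v r0 (traj X w) j) => [a|] //.
by exfalso; apply: nS; exists a.
Qed.

Lemma tau_ge_eventE j n : tau_ge_event v r0 X j.+1 n =
  visit_time_inf_event j `|` \bigcup_a (visit_time_event j a `&` no_visit_event a (a + n.-1)).
Proof.
apply/seteqP; split => w /=.
  by case/(tau_ge_iff v r0 (traj X w)) => [|[a ha]]; [left | right; exists a].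
by move=> h; apply/(tau_ge_iff v r0 (traj X w)); case: h => [|[a _ ha]]; [left | right; exists a].
Qed.

Lemma measurable_tau_ge j n : measurable (tau_ge_event v r0 X j.+1 n).
Proof.
rewrite tau_ge_eventE; apply: measurableU; first exact: measurable_visit_time_inf.
apply: bigcupT_measurable => a; apply: measurableI; first exact: measurable_visit_time.
exact: measurable_no_visit.
Qed.

Lemma pr_tau_ge j n : pr P (tau_ge_event v r0 X j.+1 n) <=
  pr P (visit_time_inf_event j) + (1 - q) ^+ (n.-1 %/ v).
Proof.
have mVN a c : measurable (visit_time_event j a `&` no_visit_event a c).
  by apply: measurableI; [exact: measurable_visit_time | exact: measurable_no_visit].
rewrite tau_ge_eventE; apply: le_trans (le_prU _ _ _) _.
- exact: measurable_visit_time_inf.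
- exact: bigcupT_measurable.
rewrite lerD2l; apply: (pr_bigcup_le (exprn_ge0 _ decay_ge0) (measurable_visit_time j)
  (fun a => mVN a _)).
- by move=> a b _ _ [w []]; rewrite /visit_time_event /path_event /= => -> [].
- by move=> a w [].
move=> a; apply: le_trans (pr_no_visit_geometric _ (@Tsum_determined v r0 j a)).
apply: le_pr (mVN _ _) (mVN _ _) _ => w [Sw nvw]; split => //; apply: no_visit_le nvw.
by rewrite leq_add2l leq_trunc_div.
Qed.

Lemma pr_visit_time_inf j : pr P (visit_time_inf_event j) = 0.
Proof.
elim: j => [|j IH].
  by rewrite (_ : visit_time_inf_event 0 = set0) ?pr0 //; apply/seteqP; split => w.
apply/le_anti; rewrite pr_ge0 andbT.
apply: (@le0_of_le_expr _ (1 - q)) => [|m]; first by rewrite decay_ge0 decay_lt1.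
have sub : visit_time_inf_event j.+1 `<=` tau_ge_event v r0 X j.+1 (m * v).+1.
  by move=> w; rewrite /tau_ge_event /path_event /= /tau => ->; case: (Tsum _ _ _ _).
apply: le_trans (le_pr P (measurable_visit_time_inf _) (measurable_tau_ge _ _) sub) _.
by apply: le_trans (pr_tau_ge j (m * v).+1) _; rewrite IH add0r /= mulnK.
Qed.

Lemma tau_ge_bound k n : (0 < k)%N ->
  (P (tau_ge_event v r0 X k n) <= ((1 - q) ^+ (n.-1 %/ v))%:E)%E.
Proof.
case: k => [//|j] _; rewrite (prE P (measurable_tau_ge j n)) lee_fin.
by apply: le_trans (pr_tau_ge j n) _; rewrite pr_visit_time_inf add0r.
Qed.

End RegenerationTail.

Lemma expr_divn_le_expR (R : realType) (r : R) (v n : nat) : 0 < r < 1 -> (0 < v)%N ->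
  r ^+ (n.-1 %/ v) <= r^-1 * expR (- (ln r^-1 / v%:R * n%:R)).
Proof.
move=> /andP[r0 r1] v_gt0; set m := (n.-1 %/ v)%N; set L := ln r^-1.
have L_ge0 : 0 <= L by rewrite ln_ge0 // invr_ge1 ?unitfE ?gt_eqF // ltW.
have lnr : ln r = - L by rewrite /L lnV ?posrE // opprK.
rewrite -[r ^+ m]lnK ?posrE ?exprn_gt0 // -[r^-1]lnK ?posrE ?invr_gt0 // -expRD ler_expR.
rewrite lnXn // lnr -/L -mulr_natr mulrAC -mulrA.
have n_le : (n <= m.+1 * v)%N by have := ltn_ceil n.-1 v_gt0; rewrite -/m; lia.
have : n%:R / v%:R <= m%:R + 1 :> R.
  by rewrite ler_pdivrMr ?ltr0n // natr1 -natrM ler_nat.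
move/(ler_wpM2l L_ge0); lra.
Qed.

Theorem lemma4p1 (R : realType) (d : measure_display) (T : measurableType d)
  (P : probability T R)
  (v : nat) (p : nat -> seq bool -> R) (delta1 delta2 : R)
  (r0 : nat -> bool) (X : nat -> T -> bool) :
  (1 <= v)%N ->
  0 < delta2 -> delta2 < delta1 -> delta1 < 1 ->
  (forall (k : nat) (w : seq bool), size w = v -> last false w = true ->
     delta2 <= p k w /\ p k w <= delta1) ->
  (exists i : nat, r0 i) ->
  (forall t : nat, (0 < t)%N -> measurable [set w | X t w]) ->
  (forall (b : nat -> bool) (n : nat),
     (P (cyl X b n.+1) = P (cyl X b n) * (step_prob v p r0 b n)%:E)%E) ->
  forall k n : nat, (1 <= k)%N ->
    let C := (1 - (1 - delta1) ^+ v.-1 * delta2)^-1 in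
    let rho := ln C / v%:R in
    (P (tau_ge_event v r0 X k n) <= (C * expR (- (rho * n%:R)))%:E)%E.
Proof.
move=> v_gt0 d2_gt0 d21 d1_lt1 p_bounds r0_has1 X_meas P_cylS k n k_gt0.
have q_gt0 := block_prob_gt0 v d2_gt0 d1_lt1.
have q_lt1 := block_prob_lt1 v d2_gt0 d21 d1_lt1.
apply: le_trans (tau_ge_bound v_gt0 d2_gt0 d21 d1_lt1 p_bounds r0_has1 X_meas P_cylS n k_gt0) _.
rewrite lee_fin; apply: expr_divn_le_expR => //.
by rewrite subr_gt0 q_lt1 ltrBlDl ltrDr q_gt0.
Qed.
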